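(* Let $(\varphi_\alpha)_{\alpha>0}$ be a non-linear regularizing filter satisfying Assumption B, let $(\delta_k)_k,(\alpha_k)_k$ be positive null sequences with $\delta_k^2/\alpha_k\to0$, and let $y\in\operatorname{ran}(\mathbf{A})$ with $\mathbf{T}_v^*(y)\in\operatorname{ran}(\Phi_{\tilde\alpha,\kappa})$ for some $\tilde\alpha>0$. Let $(y^k)_k$ be a sequence in $\mathbb{Y}$ with $\|y^k-y\|\le\delta_k$. Then $\mathbf{B}_{\alpha_k}(y^k)\rightharpoonup\mathbf{A}^+y$ weakly in $\mathbb{X}$ as $k\to\infty$.
   Context: $\mathbb{X},\mathbb{Y}$ are real Hilbert spaces and $\mathbf{A}\colon\mathbb{X}\to\mathbb{Y}$ is bounded linear with Moore–Penrose inverse $\mathbf{A}^+$. $\Lambda$ is an at most countable index set. A diagonal frame decomposition (DFD) of $\mathbf{A}$ is a triple $(u_\lambda,v_\lambda,\kappa_\lambda)_{\lambda\in\Lambda}$ such that $(u_\lambda)$ is a frame of $\ker(\mathbf{A})^\perp$, $(v_\lambda)$ is a frame of $\overline{\operatorname{ran}(\mathbf{A})}$, and $\kappa_\lambda>0$ with $\mathbf{A}^*v_\lambda=\kappa_\lambda u_\lambda$ for all $\lambda$; we fix such a DFD with $\sup_\lambda\kappa_\lambda<\infty$. $(\bar u_\lambda)$ is a dual frame of $(u_\lambda)$, i.e. $x=\sum_\lambda\langle x,u_\lambda\rangle\bar u_\lambda$ for all $x\in\ker(\mathbf{A})^\perp$. $\mathbf{T}_{\bar u}\colon\ell^2(\Lambda)\to\mathbb{X}$,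 $(c_\lambda)\mapsto\sum_\lambda c_\lambda\bar u_\lambda$, and $\mathbf{T}_v^*\colon\mathbb{Y}\to\ell^2(\Lambda)$, $y\mapsto(\langle y,v_\lambda\rangle)_\lambda$. $\mathbf{M}_\kappa\colon\ell^2(\Lambda)\to\ell^2(\Lambda)$, $(x_\lambda)\mapsto(\kappa_\lambda x_\lambda)$; $\mathbf{M}_\kappa^+$ is its Moore–Penrose inverse, with domain $\{(c_\lambda)\in\ell^2:(c_\lambda/\kappa_\lambda)\in\ell^2\}$ and $\mathbf{M}_\kappa^+((c_\lambda))=(c_\lambda/\kappa_\lambda)$. A non-linear regularizing filter is a family $(\varphi_\alpha)_{\alpha>0}$ of functions $\varphi_\alpha\colon(0,\infty)\times\mathbb{R}\to\mathbb{R}$ such that for all $\alpha,\kappa>0$: (F1) $\varphi_\alpha(\kappa,\cdot)$ is non-decreasing; (F2) $\varphi_\alpha(\kappa,\cdot)$ is 1-Lipschitz; (F3) $\varphi_\alpha(\kappa,0)=0$; (F4) $\lim_{\alpha\to0}\varphi_\alpha(\kappa,c)=c$ for all $c\in\mathbb{R}$. $\Phi_{\alpha,\kappa}\colon\ell^2(\Lambda)\to\ell^2(\Lambda)$, $(c_\lambda)\mapsto(\varphi_\alpha(\kappa_\lambda,c_\lambda))_\lambda$. Non-linear filtered DFD: $\operatorname{dom}(\mathbf{B}_\alpha)=\{y\in\mathbb{Y}:\Phi_{\alpha,\kappa}(\mathbf{T}_v^*y)\in\operatorname{dom}(\mathbf{M}_\kappa^+)\}$ and $\mathbf{B}_\alpha(y)=\sum_\lambda\kappa_\lambda^{-1}\varphi_\alpha(\kappa_\lambda,\langle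 y,v_\lambda\rangle)\bar u_\lambda=\mathbf{T}_{\bar u}\circ\mathbf{M}_\kappa^+\circ\Phi_{\alpha,\kappa}\circ\mathbf{T}_v^*(y)$. Assumption B: (B1) for all $\kappa>0$ and $x\in\mathbb{R}$, $(|\varphi_\alpha(\kappa,x)|)_{\alpha>0}$ is monotonically increasing as $\alpha\downarrow0$; (B2) there exist $d,e>0$ such that for all $\kappa,\alpha>0$, $x\in\mathbb{R}$: $|x|\le d\alpha/\kappa\Rightarrow|\varphi_\alpha(\kappa,x)|\le\frac{e\kappa}{\sqrt\alpha}|x|$. *)

From HB Require Import structures.
From mathcomp Require Import all_boot all_order all_algebra finmap.
From mathcomp Require Import all_classical all_reals all_analysis.
Set Implicit Arguments. Unset Strict Implicit. Unset Printing Implicit Defensive.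
Import Order.TTheory GRing.Theory Num.Theory.
Import numFieldNormedType.Exports.
Local Open Scope classical_set_scope.
Local Open Scope ring_scope.

(* [ip] is an inner product on the normed space V inducing its norm.
   A real Hilbert space = (V : completeNormedModType R) with such an [ip]. *)
Definition inner_product {R : realType} {V : normedModType R}
  (ip : V -> V -> R) : Prop :=
  [/\ (forall x y, ip x y = ip y x),
      (forall (a : R) x y z, ip (a *: x + y) z = a * ip x z + ip y z)
    & (forall x, ip x x = `|x| ^+ 2)].

(* weak convergence in a Hilbert space (Riesz: tested against all z) *)
Definition weak_cvg {R : realType} {V : normedModType R}
  (ip : V -> V -> R) (u : nat -> V) (x : V) : Prop :=
  forall z, (fun k => ip (u k) z) @ \oo --> ip x z.

Section totally.
Local Open Scope fset_scope.
Definition totally {I : choiceType} : set_system {fset I} :=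
  filter_from setT (fun A => [set B | A `<=` B]).

Instance totally_filter {I : choiceType} : ProperFilter (@totally I).
Proof.
eapply filter_from_proper; last by move=> A _; exists A; rewrite /= fsubset_refl.
apply: filter_fromT_filter; first by exists fset0.
by move=> A B /=; exists (A `|` B) => P /=; rewrite fsubUset => /andP[].
Qed.
End totally.

Definition HasSum {R : realType} {V : normedModType R} {I : choiceType}
  (f : I -> V) (x : V) : Prop :=
  (fun A : {fset I} => \sum_(i <- A) f i) @ totally --> x.

Definition in_l2 {R : realType} {I : choiceType} (c : I -> R) : Prop :=
  (\esum_(i in [set: I]) ((c i) ^+ 2)%:E < +oo)%E.

Definition kerperp {R : realType} {X Y : normedModType R}
  (ipX : X -> X -> R) (A : X -> Y) : set X :=
  [set x | forall z, A z = 0 -> ipX x z = 0].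

Definition closed_range {R : realType} {X Y : normedModType R}
  (A : X -> Y) : set Y := closure (range A).

Definition is_frame {R : realType} {V : normedModType R} {I : choiceType}
  (ip : V -> V -> R) (S : set V) (u : I -> V) : Prop :=
  (forall i, S (u i)) /\
  exists a b : R, [/\ 0 < a, 0 < b &
    forall x, S x ->
      ((a * `|x| ^+ 2)%:E <= \esum_(i in [set: I]) ((ip x (u i)) ^+ 2)%:E /\
       \esum_(i in [set: I]) ((ip x (u i)) ^+ 2)%:E <= (b * `|x| ^+ 2)%:E)%E].

Definition is_DFD {R : realType} {X Y : normedModType R} {I : choiceType}
  (ipX : X -> X -> R) (ipY : Y -> Y -> R) (A : X -> Y)
  (u : I -> X) (v : I -> Y) (kappa : I -> R) : Prop :=
  [/\ is_frame ipX (kerperp ipX A) u,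
      is_frame ipY (closed_range A) v,
      (forall i, 0 < kappa i)
    & (* A^* v_i = kappa_i u_i, written through the defining identity of A^* *)
      (forall i x, ipY (A x) (v i) = kappa i * ipX x (u i))].

Definition is_dual_frame {R : realType} {X : normedModType R} {I : choiceType}
  (ipX : X -> X -> R) (S : set X) (u ubar : I -> X) : Prop :=
  is_frame ipX S ubar /\
  forall x, S x -> HasSum (fun i => ipX x (u i) *: ubar i) x.

(* Moore-Penrose inverse on ran(A): A^+ y is the unique x in ker(A)^perp
   with A x = y.  [MP_value A y x] means x = A^+ y  (for y in ran A). *)
Definition MP_value {R : realType} {X Y : normedModType R}
  (ipX : X -> X -> R) (A : X -> Y) (y : Y) (x : X) : Prop :=
  kerperp ipX A x /\ A x = y.

(* phi alpha kappa c = varphi_alpha(kappa, c) *)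
Definition nonlinear_reg_filter {R : realType} (phi : R -> R -> R -> R) : Prop :=
  forall alpha kappa, 0 < alpha -> 0 < kappa ->
  [/\ {homo phi alpha kappa : s t / s <= t},
      (forall s t, `|phi alpha kappa s - phi alpha kappa t| <= `|s - t|),
      phi alpha kappa 0 = 0
    & (forall c, phi^~ kappa ^~ c @ 0^'+ --> c)].

Definition assumption_B {R : realType} (phi : R -> R -> R -> R) : Prop :=
  (forall kappa x alpha beta, 0 < kappa -> 0 < alpha -> alpha <= beta ->
     `|phi beta kappa x| <= `|phi alpha kappa x|) /\
  exists d e : R, [/\ 0 < d, 0 < e &
    forall kappa alpha x, 0 < kappa -> 0 < alpha ->
      `|x| <= d * alpha / kappa ->
      `|phi alpha kappa x| <= e * kappa / Num.sqrt alpha * `|x|].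

Definition B_dom {R : realType} {Y : normedModType R} {I : choiceType}
  (ipY : Y -> Y -> R) (v : I -> Y) (kappa : I -> R)
  (phi : R -> R -> R -> R) (alpha : R) (y : Y) : Prop :=
  in_l2 (fun i => phi alpha (kappa i) (ipY y (v i))) /\
  in_l2 (fun i => (kappa i)^-1 * phi alpha (kappa i) (ipY y (v i))).

(* [B_value ... alpha y x] means  y in dom(B_alpha) and B_alpha(y) = x *)
Definition B_value {R : realType} {X Y : normedModType R} {I : choiceType}
  (ipY : Y -> Y -> R) (ubar : I -> X) (v : I -> Y) (kappa : I -> R)
  (phi : R -> R -> R -> R) (alpha : R) (y : Y) (x : X) : Prop :=
  B_dom ipY v kappa phi alpha y /\
  HasSum (fun i => ((kappa i)^-1 * phi alpha (kappa i) (ipY y (v i))) *: ubar i) x.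

(* Let e^k_i := kappa_i^-1 phi_{alpha_k}(kappa_i, <y^k, v_i>) - <A^+ y, u_i> be the
   coefficients of B_{alpha_k}(y^k) - A^+ y in the dual frame (ubar_i).  Each e^k_i
   tends to 0 by (F4) and the 1-Lipschitz property (F2).  For uniformity in i, (B2)
   applied at alpha_k and, through the source condition, at alpha~ gives
   |e^k_i| <= (e + 2) |<A^+ y, u_i>| + rho^k_i |n^k_i|, where n^k_i := <y^k - y, v_i>
   and (rho^k_i)^2 <= C (1/alpha_k + 1 + (n^k_i)^2 / alpha_k^2).  The first part is a
   fixed square-summable sequence; the second has squared l^2 norm
   O(delta_k^2/alpha_k + delta_k^2 + (delta_k^2/alpha_k)^2) -> 0.  Testing against z,
   finitely many leading terms converge, and the rest is small uniformly in k by
   Cauchy-Schwarz, which gives weak convergence. *)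

From HB Require Import structures.
From mathcomp Require Import all_boot all_order all_algebra finmap.
From mathcomp Require Import all_classical all_reals all_analysis.
From mathcomp Require Import ring lra.
Import Order.TTheory GRing.Theory Num.Theory.
Import numFieldNormedType.Exports.
Local Open Scope classical_set_scope.
Local Open Scope ring_scope.
Set Implicit Arguments. Unset Strict Implicit. Unset Printing Implicit Defensive.

#[local] Existing Instance totally_filter.

Section RealInequalities.
Variable R : realFieldType.

Lemma discriminant_le (a b c : R) : 0 <= c ->
  (forall t, 0 <= a - 2 * t * b + t ^+ 2 * c) -> b ^+ 2 <= a * c.
Proof.
move=> c_ge0 quad_ge0.
have a_ge0 : 0 <= a by have := quad_ge0 0; rewrite expr0n /=; lra.
have [c0|c_neq0] := eqVneq c 0.
  have [b0|b_neq0] := eqVneq b 0; first by rewrite b0 c0; nra.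
  have := quad_ge0 ((a + 1) / (2 * b)).
  have -> : a - 2 * ((a + 1) / (2 * b)) * b + ((a + 1) / (2 * b)) ^+ 2 * c = -1.
    by rewrite c0; field; rewrite b_neq0.
  lra.
have := quad_ge0 (b / c).
have -> : a - 2 * (b / c) * b + (b / c) ^+ 2 * c = (a * c - b ^+ 2) / c by field.
by rewrite pmulr_lge0 ?invr_gt0 ?lt_def ?c_neq0 // subr_ge0.
Qed.

Lemma sum_mul_sqr_le (J : Type) (s : seq J) (a b : J -> R) :
  (\sum_(i <- s) a i * b i) ^+ 2 <=
  (\sum_(i <- s) a i ^+ 2) * (\sum_(i <- s) b i ^+ 2).
Proof.
apply: discriminant_le; first by apply: sumr_ge0 => i _; exact: sqr_ge0.
move=> t.
have -> : \sum_(i <- s) a i ^+ 2 - 2 * t * (\sum_(i <- s) a i * b i) +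
   t ^+ 2 * (\sum_(i <- s) b i ^+ 2) = \sum_(i <- s) (a i - t * b i) ^+ 2.
  rewrite !mulr_sumr -sumrB -big_split /=; apply: eq_bigr => i _; ring.
by apply: sumr_ge0 => i _; exact: sqr_ge0.
Qed.

Lemma sum_sqr_le_sqr_sum (J : Type) (s : seq J) (a : J -> R) :
  (forall i, 0 <= a i) -> \sum_(i <- s) a i ^+ 2 <= (\sum_(i <- s) a i) ^+ 2.
Proof.
move=> a_ge0; elim: s => [|j s IH]; first by rewrite !big_nil expr0n.
rewrite !big_cons; have : 0 <= \sum_(i <- s) a i by apply: sumr_ge0.
have := a_ge0 j; nra.
Qed.

Lemma le_of_sqr_le_mul (x B : R) :
  0 <= B -> 0 <= x -> x ^+ 2 <= B * x -> x <= B.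
Proof. by move=> B_ge0 x_ge0; nra. Qed.

End RealInequalities.

Lemma ler_sqrt_of_sqr_le (R : rcfType) (x b : R) :
  0 <= x -> x ^+ 2 <= b -> x <= Num.sqrt b.
Proof. by move=> x_ge0 /ler_wsqrtr; rewrite sqrtr_sqr ger0_norm. Qed.

Section InnerProduct.
Variables (R : realType) (V : normedModType R) (ip : V -> V -> R).
Hypothesis ip_inner : inner_product ip.

Lemma ipC x y : ip x y = ip y x. Proof. by case: ip_inner. Qed.
Lemma ipxx x : ip x x = `|x| ^+ 2. Proof. by case: ip_inner. Qed.

Lemma ipZlDl a x y z : ip (a *: x + y) z = a * ip x z + ip y z.
Proof. by case: ip_inner. Qed.

Lemma ip0l z : ip 0 z = 0.
Proof. have := ipZlDl 1 0 0 z; rewrite scaler0 addr0 mul1r; lra. Qed.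

Lemma ipDl x y z : ip (x + y) z = ip x z + ip y z.
Proof. by rewrite -(scale1r x) ipZlDl mul1r scale1r. Qed.

Lemma ipZl a x z : ip (a *: x) z = a * ip x z.
Proof. by rewrite -(addr0 (a *: x)) ipZlDl ip0l addr0. Qed.

Lemma ipBl x y z : ip (x - y) z = ip x z - ip y z.
Proof. by rewrite -scaleN1r addrC ipZlDl mulN1r addrC. Qed.

Lemma ipZr a x z : ip z (a *: x) = a * ip z x.
Proof. by rewrite ipC ipZl ipC. Qed.

Lemma ipBr x y z : ip z (x - y) = ip z x - ip z y.
Proof. by rewrite ipC ipBl !(ipC z). Qed.

Lemma ip_suml (J : Type) (s : seq J) (f : J -> V) z :
  ip (\sum_(i <- s) f i) z = \sum_(i <- s) ip (f i) z.
Proof. by elim: s => [|a s IH]; rewrite ?big_nil ?ip0l // !big_cons ipDl IH. Qed.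

Lemma ip_sqr_le x y : ip x y ^+ 2 <= `|x| ^+ 2 * `|y| ^+ 2.
Proof.
apply: discriminant_le; first exact: sqr_ge0.
move=> t; have : 0 <= ip (x - t *: y) (x - t *: y) by rewrite ipxx sqr_ge0.
by rewrite ipBl !ipBr !ipZl !ipZr !ipxx (ipC y x); nra.
Qed.

Lemma ip_norm_le x y : `|ip x y| <= `|x| * `|y|.
Proof.
rewrite -(ler_pXn2r (_ : 0 < 2)%N) ?nnegrE ?mulr_ge0 //.
by rewrite real_normK ?num_real // exprMn ip_sqr_le.
Qed.

End InnerProduct.

Lemma big_fsetU_notin (I : choiceType) (V : nmodType) (p : I -> V) (G F : {fset I}) :
  \sum_(i <- (G `|` F)%fset) p i = \sum_(i <- F) p i + \sum_(i <- G | i \notin F) p i.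
Proof.
rewrite (big_fsetID _ (mem F)) /=; congr (_ + _).
  by apply: eq_fbigl => i; rewrite !inE /=; apply/andP/idP => [[]//|->]; rewrite orbT.
rewrite [RHS]big_fset_condE; apply: eq_fbigl => i; rewrite !inE /=.
by case: (i \in F); rewrite ?andbF ?andbT ?orbF.
Qed.

Section FiniteSums.
Variables (R : realType) (I : choiceType).

Definition fsums_le (p : I -> R) (M : R) := forall F : {fset I}, \sum_(i <- F) p i <= M.

Lemma fsum_le_subset (p : I -> R) (A B : {fset I}) : (forall i, 0 <= p i) ->
  (A `<=` B)%fset -> \sum_(i <- A) p i <= \sum_(i <- B) p i.
Proof.
move=> p_ge0 /fsetUidPl AB; rewrite -AB big_fsetU_notin lerDl.
by apply: sumr_ge0 => i _.
Qed.

Lemma fsum_tail_small (p : I -> R) (M : R) : (forall i, 0 <= p i) -> fsums_le p M ->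
  forall eps, 0 < eps -> exists F0 : {fset I},
    forall G : {fset I}, \sum_(i <- G | i \notin F0) p i <= eps.
Proof.
move=> p_ge0 pM eps eps_gt0.
pose E := [set x : R | exists F : {fset I}, x = \sum_(i <- F) p i].
have supE : has_sup E by split; [exists 0, fset0; rewrite big_seq_fset0|exists M => _ [F ->]].
have [_ [F0 ->] near_sup] := sup_adherent eps_gt0 supE.
exists F0 => G.
have := sup_upper_bound supE (ex_intro _ (G `|` F0)%fset erefl).
rewrite big_fsetU_notin; lra.
Qed.

Lemma in_l2P (c : I -> R) : in_l2 c <-> exists M, fsums_le (fun i => c i ^+ 2) M.
Proof.
split=> [c_l2|[M cM]].
  have esum_ge0 : (0 <= \esum_(i in [set: I]) ((c i) ^+ 2)%:E)%E.
    by apply: esum_ge0 => i _; rewrite lee_fin sqr_ge0.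
  exists (fine (\esum_(i in [set: I]) ((c i) ^+ 2)%:E)) => F.
  rewrite -lee_fin fineK ?ge0_fin_numE //.
  apply: esum_ge; exists [set` F]; first by split => //; exact: finite_fset.
  by rewrite fsbig_finite //= set_fsetK sumEFin.
apply: (@le_lt_trans _ _ M%:E); last exact: ltry.
apply: ge_ereal_sup => _ [F [finF _] <-].
by rewrite fsbig_finite //= sumEFin lee_fin.
Qed.

Lemma fsums_le_mul (a b : I -> R) (Ma Mb : R) :
  (forall i, 0 <= a i) -> (forall i, 0 <= b i) ->
  fsums_le (fun i => a i ^+ 2) Ma -> fsums_le (fun i => b i ^+ 2) Mb ->
  fsums_le (fun i => a i * b i) (Num.sqrt (Ma * Mb)).
Proof.
move=> a_ge0 b_ge0 aM bM F; apply: ler_sqrt_of_sqr_le.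
  by apply: sumr_ge0 => i _; rewrite mulr_ge0.
apply: (le_trans (sum_mul_sqr_le _ _ _)).
by apply: ler_pM => //; apply: sumr_ge0 => i _; exact: sqr_ge0.
Qed.

End FiniteSums.

Section Frames.
Variables (R : realType) (V : normedModType R) (ip : V -> V -> R) (I : choiceType).
Hypothesis ip_inner : inner_product ip.

Definition subspace (S : set V) := S 0 /\ forall a x y, S x -> S y -> S (a *: x + y).

Lemma subspace_sum (S : set V) (u : I -> V) (c : I -> R) (s : seq I) :
  subspace S -> (forall i, S (u i)) -> S (\sum_(i <- s) c i *: u i).
Proof.
move=> [S0 SD] Su; elim: s => [|j s IH]; first by rewrite big_nil.
by rewrite big_cons; apply: SD.
Qed.

Lemma frame_upper (S : set V) (u : I -> V) : is_frame ip S u ->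
  exists2 b, 0 < b & forall x, S x -> fsums_le (fun i => ip x (u i) ^+ 2) (b * `|x| ^+ 2).
Proof.
case=> _ [a [b [_ b_gt0 ab]]]; exists b => // x Sx F.
rewrite -lee_fin; apply: le_trans (proj2 (ab x Sx)).
apply: esum_ge; exists [set` F]; first by split => //; exact: finite_fset.
by rewrite fsbig_finite //= set_fsetK sumEFin.
Qed.

Variables (S : set V) (u : I -> V) (b : R).
Hypotheses (S_subspace : subspace S) (Su : forall i, S (u i)) (b_ge0 : 0 <= b)
  (u_upper : forall x, S x -> fsums_le (fun i => ip x (u i) ^+ 2) (b * `|x| ^+ 2)).

Lemma frame_synthesis_le (c : I -> R) (F : {fset I}) :
  `|\sum_(i <- F) c i *: u i| ^+ 2 <= b * \sum_(i <- F) c i ^+ 2.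
Proof.
set s := \sum_(i <- F) c i *: u i.
have sc : `|s| ^+ 2 = \sum_(i <- F) c i * ip s (u i).
  rewrite -(ipxx ip_inner) {1}/s (ip_suml ip_inner); apply: eq_bigr => i _.
  by rewrite (ipZl ip_inner) (ipC ip_inner).
have c2_ge0 : 0 <= \sum_(i <- F) c i ^+ 2 by apply: sumr_ge0 => i _; exact: sqr_ge0.
apply: le_of_sqr_le_mul; [exact: mulr_ge0|exact: sqr_ge0|].
rewrite [in X in X <= _]sc; apply: (le_trans (sum_mul_sqr_le _ _ _)).
rewrite (mulrC b) -mulrA ler_wpM2l //.
exact: u_upper (subspace_sum _ _ S_subspace Su) F.
Qed.

Lemma frame_bessel (z : V) : fsums_le (fun i => ip z (u i) ^+ 2) (b * `|z| ^+ 2).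
Proof.
move=> F; set W := \sum_(i <- F) _.
set s := \sum_(i <- F) ip z (u i) *: u i.
have Ws : W = ip z s.
  rewrite /s (ipC ip_inner) (ip_suml ip_inner) /W; apply: eq_bigr => i _.
  by rewrite (ipZl ip_inner) (ipC ip_inner) expr2.
have W_ge0 : 0 <= W by apply: sumr_ge0 => i _; exact: sqr_ge0.
apply: le_of_sqr_le_mul; [by rewrite mulr_ge0 ?sqr_ge0|by []|].
rewrite [in X in X <= _]Ws; apply: le_trans (ip_sqr_le ip_inner z s) _.
have : `|s| ^+ 2 <= b * W by exact: frame_synthesis_le.
have : 0 <= `|z| ^+ 2 := sqr_ge0 _.
nra.
Qed.

End Frames.

Lemma kerperp_subspace (R : realType) (X Y : normedModType R) (ipX : X -> X -> R)
  (A : X -> Y) : inner_product ipX -> subspace (kerperp ipX A).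
Proof.
move=> ipX_inner; split=> [z _|a x x' Kx Kx' z Az]; first by rewrite (ip0l ipX_inner).
by rewrite (ipZlDl ipX_inner) Kx // Kx' // mulr0 addr0.
Qed.

Lemma closure_normP (R : realType) (V : normedModType R) (E : set V) (p : V) :
  closure E p <-> forall e, 0 < e -> exists2 a, E a & `|p - a| < e.
Proof.
split=> [Ep e e_gt0|Ep B /nbhs_ballP [e e_gt0 eB]].
  have [a [Ea pa]] : E `&` ball p e !=set0 by apply: Ep; apply/nbhs_ballP; exists e.
  by exists a; move: pa; rewrite // -ball_normE.
have [a Ea pa] := Ep e e_gt0.
by exists a; split => //; apply: eB; rewrite -ball_normE.
Qed.

Lemma closed_range_subspace (R : realType) (X Y : normedModType R)
  (A : {linear X -> Y}) : subspace (closed_range A).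
Proof.
split; first by apply: subset_closure; exists 0 => //; rewrite linear0.
move=> a p q /closure_normP Cp /closure_normP Cq; apply/closure_normP => e e_gt0.
have a1_gt0 : 0 < `|a| + 1 by rewrite ltr_pwDr.
have [_ [xp _ <-] hp] : exists2 a', range A a' & `|p - a'| < e / (2 * (`|a| + 1)).
  by apply: Cp; rewrite divr_gt0 ?mulr_gt0.
have [_ [xq _ <-] hq] : exists2 a', range A a' & `|q - a'| < e / 2.
  by apply: Cq; rewrite divr_gt0.
exists (A (a *: xp + xq)); first by exists (a *: xp + xq).
rewrite linearD linearZ /=.
have -> : a *: p + q - (a *: A xp + A xq) = a *: (p - A xp) + (q - A xq).
  by rewrite scalerBr opprD addrACA.
apply: (le_lt_trans (ler_normD _ _)); rewrite normrZ.
have : `|a| * `|p - A xp| <= `|a| * (e / (2 * (`|a| + 1))) by rewrite ler_wpM2l // ltW.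
have : `|a| * (e / (2 * (`|a| + 1))) <= e / 2.
  have -> : `|a| * (e / (2 * (`|a| + 1))) = e / 2 * (`|a| / (`|a| + 1)).
    by field; rewrite gt_eqF.
  apply: ler_piMr; first by rewrite divr_ge0 // ltW.
  by rewrite ler_pdivrMr // mul1r lerDl.
lra.
Qed.

Lemma HasSum_synthesis (R : realType) (I : choiceType) (V : completeNormedModType R)
  (w : I -> V) (b : R) : 0 <= b ->
  (forall (c : I -> R) (F : {fset I}),
     `|\sum_(i <- F) c i *: w i| ^+ 2 <= b * \sum_(i <- F) c i ^+ 2) ->
  forall c : I -> R, in_l2 c -> exists x, HasSum (fun i => c i *: w i) x.
Proof.
move=> b_ge0 synth c /in_l2P [M cM].
pose f (A : {fset I}) := \sum_(i <- A) c i *: w i.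
suff : cvg (f @ totally) by exists (lim (f @ totally)).
have f_proper : ProperFilter (f @ totally).
  by apply: fmap_proper_filter; exact: totally_filter.
apply: cauchy_cvg; apply: cauchy_exP => eps eps_gt0.
have e_gt0 : 0 < eps ^+ 2 / (b + 1) by rewrite divr_gt0 ?exprn_gt0 //; lra.
have [A0 tail] := fsum_tail_small (fun i => sqr_ge0 (c i)) cM e_gt0.
exists (f A0), A0 => // B /= A0B; rewrite -ball_normE /=.
rewrite /f -(fsetUidPl _ _ A0B) big_fsetU_notin opprD addrA subrr sub0r normrN.
rewrite big_fset_condE -(@ltr_pXn2r _ 2) ?nnegrE ?(ltW eps_gt0) //.
apply: (le_lt_trans (synth _ _)); move: (tail B); rewrite big_fset_condE => cB.
apply: (le_lt_trans (ler_wpM2l b_ge0 cB)).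
by rewrite mulrA ltr_pdivrMr; [nra|lra].
Qed.

Lemma HasSumB (R : realType) (I : choiceType) (V : normedModType R)
  (f g : I -> V) (x x' : V) :
  HasSum f x -> HasSum g x' -> HasSum (fun i => f i - g i) (x - x').
Proof.
move=> fx gx'; apply: cvg_trans (cvgB fx gx'); apply: near_eq_cvg; near=> A.
by rewrite /= sumrB.
Unshelve. all: by end_near.
Qed.

Lemma fsum_dominated_split (R : realType) (I : choiceType) (e F g w : I -> R)
  (F0 A : {fset I}) :
  (forall i, 0 <= w i) -> (forall i, 0 <= g i) -> (forall i, `|e i| <= F i + g i) ->
  \sum_(i <- A) `|e i| * w i <= \sum_(i <- F0) `|e i| * w i +
    \sum_(i <- A | i \notin F0) F i * w i + \sum_(i <- A) g i * w i.
Proof.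
move=> w_ge0 g_ge0 e_le; rewrite (bigID (mem F0)) /= -addrA lerD //.
  rewrite big_fset_condE; apply: fsum_le_subset => [i|]; first by rewrite mulr_ge0.
  by apply/fsubsetP => i; rewrite !inE /= => /andP[].
apply: le_trans (_ : \sum_(i <- A | i \notin F0) (F i * w i + g i * w i) <= _).
  by apply: ler_sum => i _; rewrite -mulrDl ler_wpM2r.
rewrite big_split lerD2l /= [leRHS](bigID (mem F0)) /= lerDr.
by apply: sumr_ge0 => i _; rewrite mulr_ge0.
Qed.

Section WeakConvergence.
Variables (R : realType) (I : choiceType) (V : normedModType R) (ip : V -> V -> R).
Hypothesis ip_inner : inner_product ip.

Lemma ip_HasSum_le (w : I -> V) (e : I -> R) (s z : V) (M : R) :
  HasSum (fun i => e i *: w i) s ->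
  fsums_le (fun i => `|e i| * `|ip (w i) z|) M -> `|ip s z| <= M.
Proof.
move=> es eM; apply/ler_addgt0Pr => eta eta_gt0.
have z1_gt0 : 0 < `|z| + 1 by rewrite ltr_pwDr.
have [A0 _ /(_ A0 (fsubset_refl A0)) /= sA0] :=
  proj1 (cvgrPdist_lt _ _) es (eta / (`|z| + 1)) (divr_gt0 eta_gt0 z1_gt0).
set S := \sum_(i <- A0) _ in sA0.
have -> : ip s z = ip S z + ip (s - S) z by rewrite -(ipDl ip_inner) addrC subrK.
apply: (le_trans (ler_normD _ _)); apply: lerD.
  rewrite /S (ip_suml ip_inner); apply: le_trans (ler_norm_sum _ _ _) (le_trans _ (eM A0)).
  by apply: ler_sum => i _; rewrite (ipZl ip_inner) normrM.
apply: (le_trans (ip_norm_le ip_inner _ _)).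
apply: (@le_trans _ _ (eta / (`|z| + 1) * (`|z| + 1))); last by rewrite divfK ?gt_eqF.
by apply: ler_pM => //; [exact: ltW|rewrite lerDl].
Qed.

Lemma weak_cvg_dominated (ub : I -> V) (xk : nat -> V) (xd : V)
  (ck : nat -> I -> R) (xc F : I -> R) (g : nat -> I -> R) (MF : R) (G : nat -> R) :
  (forall z, exists W, fsums_le (fun i => ip (ub i) z ^+ 2) W) ->
  (forall k, HasSum (fun i => ck k i *: ub i) (xk k)) ->
  HasSum (fun i => xc i *: ub i) xd ->
  (forall i, 0 <= F i) -> fsums_le (fun i => F i ^+ 2) MF ->
  (forall k i, 0 <= g k i) -> (forall k, fsums_le (fun i => g k i ^+ 2) (G k)) ->
  G @ \oo --> 0 ->
  (forall k i, `|ck k i - xc i| <= F i + g k i) ->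
  (forall i, ck ^~ i @ \oo --> xc i) ->
  weak_cvg ip xk xd.
Proof.
move=> ub_bessel ck_sum xc_sum F_ge0 F_l2 g_ge0 g_l2 G_cvg0 ck_dom ck_cvg z.
have [W wW] := ub_bessel z; pose w i := `|ip (ub i) z|.
have w_ge0 i : 0 <= w i := normr_ge0 _.
have w_l2 : fsums_le (fun i => w i ^+ 2) W.
  move=> A; apply: le_trans (wW A); apply: ler_sum => i _.
  by rewrite /w real_normK ?num_real.
apply/cvgrPdist_le => eps eps_gt0.
have eps3_gt0 : 0 < eps / 3 by rewrite divr_gt0.
have [F0 tail] := fsum_tail_small (fun i => mulr_ge0 (F_ge0 i) (w_ge0 i))
  (fsums_le_mul F_ge0 w_ge0 F_l2 w_l2) eps3_gt0.
have head_cvg0 : (fun k => \sum_(i <- F0) `|ck k i - xc i| * w i) @ \oo --> 0.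
  have head_i i : xpredT i ->
      (fun k => `|ck k i - xc i| * w i) @ \oo --> (fun=> 0 : R) i.
    move=> _; rewrite /= -(mul0r (w i)) -(normr0 R) -(subrr (xc i)).
    by apply: cvgMr_tmp; apply: cvg_norm; apply: cvgB => //; exact: cvg_cst.
  have := cvg_big (op := +%R) (x0 := 0) (r := F0) add_continuous _ head_i.
  by rewrite big1 //; exact.
have tail_cvg0 : (fun k => Num.sqrt (G k * W)) @ \oo --> 0.
  rewrite -sqrtr0 -(mul0r W); apply: continuous_cvg; first exact: sqrt_continuous.
  exact: cvgMr_tmp.
move/cvgrPdist_le: head_cvg0 => /(_ _ eps3_gt0) head_small.
move/cvgrPdist_le: tail_cvg0 => /(_ _ eps3_gt0) tail_small.
apply: filterS2 head_small tail_small => k head_k tail_k.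
have e_sum : HasSum (fun i => (ck k i - xc i) *: ub i) (xk k - xd).
  by under eq_fun do rewrite scalerBl; exact: HasSumB.
rewrite distrC -(ipBl ip_inner); apply: (ip_HasSum_le e_sum) => A.
apply: (le_trans (fsum_dominated_split F0 A w_ge0 (g_ge0 k) (ck_dom k))).
have := fsums_le_mul (g_ge0 k) w_ge0 (g_l2 k) w_l2 A.
have := tail A; move: head_k tail_k.
rewrite !sub0r !normrN !ger0_norm ?sqrtr_ge0 //; last first.
  by apply: sumr_ge0 => i _; rewrite mulr_ge0.
have : eps / 3 + eps / 3 + eps / 3 = eps by field.
lra.
Qed.

End WeakConvergence.

Section FilterEstimate.
Variables (R : realType) (d e ta K : R).
Hypotheses (d_gt0 : 0 < d) (e_gt0 : 0 < e) (ta_gt0 : 0 < ta) (K_ge0 : 0 <= K).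
Let d_ge0 := ltW d_gt0.
Let e_ge0 := ltW e_gt0.

(* [amp0 a + amp2 a * n ^+ 2] bounds the square of the factor by which the noise
   coefficient [n] is amplified in [filter_err_le]; its summands come from the
   four cases of that estimate. *)
Definition amp0 (a : R) :=
  ((1 + e) ^+ 2 + 2 * e * K / (d * Num.sqrt ta)) / a + (K / (d * ta)) ^+ 2.
Definition amp2 (a : R) := (2 / (d * a)) ^+ 2.

Lemma amp0_ge0 a : 0 < a -> 0 <= amp0 a.
Proof.
move=> a_gt0; have a_ge0 := ltW a_gt0.
rewrite /amp0 addr_ge0 ?sqr_ge0 // divr_ge0 // addr_ge0 ?sqr_ge0 //.
by rewrite divr_ge0 ?mulr_ge0 ?sqrtr_ge0.
Qed.

Lemma filter_err_small_arg (a k y n P : R) : 0 < a -> 0 < k ->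
  `|P| <= `|y + n| -> `|P| <= e * k / Num.sqrt a * `|y + n| ->
  `|P - y| <= (e + 2) * `|y| + (1 + e) / Num.sqrt a * k * `|n|.
Proof.
move=> a_gt0 k_gt0 P_le P_leB.
set r := Num.sqrt a; have r_gt0 : 0 < r by rewrite sqrtr_gt0.
have q_ge0 : 0 <= k / r by rewrite divr_ge0 // ltW.
have -> : (1 + e) / r * k * `|n| = (1 + e) * (k / r) * `|n| by ring.
have yn_le := ler_normD y n; have Py_le := ler_normB P y.
have := normr_ge0 y; have := normr_ge0 n => n_ge0 y_ge0.
have ey_ge0 : 0 <= e * `|y| by rewrite mulr_ge0.
have [r_le_k|k_lt_r] := leP r k.
  have q_ge1 : 1 <= k / r by rewrite ler_pdivlMr // mul1r.
  have : `|n| <= (1 + e) * (k / r) * `|n|.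
    apply: ler_peMl => //.
    by rewrite mulrDl mul1r (le_trans q_ge1) // lerDl mulr_ge0.
  lra.
have q_lt1 : k / r < 1 by rewrite ltr_pdivrMr // mul1r.
have eq_ge0 : 0 <= e * (k / r) by rewrite mulr_ge0.
have : e * (k / r) * `|y + n| <= e * (k / r) * (`|y| + `|n|) by rewrite ler_wpM2l.
have : e * (k / r) * `|y| <= e * `|y|.
  by rewrite mulrAC; apply: ler_piMr => //; exact: ltW.
have : e * (k / r) * `|n| <= (1 + e) * (k / r) * `|n|.
  by rewrite ler_wpM2r // ler_wpM2r //; lra.
have : `|P| <= e * (k / r) * `|y + n| by rewrite mulrA.
lra.
Qed.

Lemma inv_sqr_le_large_arg (a k y n c : R) : 0 < a -> 0 < k ->
  d * a / k < `|y + n| ->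
  (`|c| <= d * ta / k -> `|y| <= e * k / Num.sqrt ta * `|c|) -> `|c| <= K ->
  k^-1 ^+ 2 <= amp0 a + amp2 a * n ^+ 2.
Proof.
move=> a_gt0 k_gt0 yn_gt B_ta c_le_K.
set w := k^-1 in yn_gt *; have w_gt0 : 0 < w by rewrite invr_gt0.
have kw : k * w = 1 by rewrite divff ?gt_eqF.
have da_gt0 : 0 < d * a by rewrite mulr_gt0.
have s_gt0 : 0 < Num.sqrt ta by rewrite sqrtr_gt0.
set Z := e * K / Num.sqrt ta; have Z_ge0 : 0 <= Z by rewrite divr_ge0 // ?mulr_ge0 // ltW.
set C := (K / (d * ta)) ^+ 2; have C_ge0 : 0 <= C := sqr_ge0 _.
have amp0E : amp0 a = (1 + e) ^+ 2 / a + 2 * Z / (d * a) + C.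
  by rewrite /amp0 mulrDl /Z; congr (_ + _ + _); field; rewrite !gt_eqF.
have amp0_ge : 2 * Z / (d * a) + C <= amp0 a.
  by rewrite amp0E -addrA lerDr divr_ge0 ?sqr_ge0 // ltW.
have amp2n_ge0 : 0 <= amp2 a * n ^+ 2 by rewrite mulr_ge0 ?sqr_ge0.
have yn_le := ler_normD y n.
have [y_le_n|n_lt_y] := leP `|y| `|n|.
  have w_le : w <= 2 / (d * a) * `|n| by rewrite mulrAC ler_pdivlMr // mulrC; lra.
  suff : w ^+ 2 <= amp2 a * n ^+ 2 by have := amp0_ge0 a_gt0; lra.
  rewrite /amp2 -(real_normK (num_real n)) -exprMn ler_sqr ?nnegrE ?(ltW w_gt0) //.
  by rewrite mulr_ge0 // divr_ge0 // ltW.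
suff : w ^+ 2 <= 2 * Z / (d * a) + C.
  by have := divr_ge0 (sqr_ge0 (1 + e)) (ltW a_gt0); lra.
have [c_small|c_large] := leP `|c| (d * ta / k).
  have y_le : `|y| <= k * Z.
    apply: le_trans (B_ta c_small) _.
    have -> : e * k / Num.sqrt ta * `|c| = k * (e / Num.sqrt ta) * `|c| by ring.
    have -> : k * Z = k * (e / Num.sqrt ta) * K by rewrite /Z; ring.
    by rewrite ler_wpM2l // mulr_ge0 ?divr_ge0 // ltW.
  have : d * a * w * w < 2 * (k * Z) * w by rewrite ltr_pM2r //; lra.
  have -> : 2 * (k * Z) * w = 2 * Z * (k * w) by ring.
  rewrite kw mulr1 -mulrA -expr2 -ltr_pdivlMl // mulrC => w2_lt.
  by apply: le_trans (ltW w2_lt) _; rewrite lerDl.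
have w_le : w <= K / (d * ta).
  rewrite ler_pdivlMr ?mulr_gt0 // mulrC; apply: ltW; exact: lt_le_trans c_le_K.
have : 0 <= 2 * Z / (d * a) by rewrite divr_ge0 ?mulr_ge0 // ltW.
suff : w ^+ 2 <= C by lra.
by rewrite ler_sqr ?nnegrE ?(ltW w_gt0) // divr_ge0 // mulr_ge0 // ltW.
Qed.

(* Read [P] as phi_a(k, y + n), [P0] as phi_a(k, y) and [c] as a preimage with
   phi_ta(k, c) = y. *)
Lemma filter_err_le (a k y n c P P0 : R) : 0 < a -> 0 < k ->
  `|P| <= `|y + n| -> `|P0| <= `|y| -> `|P - P0| <= `|n| ->
  (`|y + n| <= d * a / k -> `|P| <= e * k / Num.sqrt a * `|y + n|) ->
  (`|c| <= d * ta / k -> `|y| <= e * k / Num.sqrt ta * `|c|) -> `|c| <= K ->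
  exists rho, [/\ 0 <= rho, rho ^+ 2 <= amp0 a + amp2 a * n ^+ 2
    & `|P - y| <= (e + 2) * `|y| + rho * k * `|n|].
Proof.
move=> a_gt0 k_gt0 P_le P0_le PP0_le B_a B_ta c_le.
have a_ge0 := ltW a_gt0.
have amp2n_ge0 : 0 <= amp2 a * n ^+ 2 by rewrite mulr_ge0 ?sqr_ge0.
have [yn_small|yn_large] := leP `|y + n| (d * a / k).
  exists ((1 + e) / Num.sqrt a); split.
  - by rewrite divr_ge0 ?sqrtr_ge0 ?addr_ge0.
  - rewrite expr_div_n sqr_sqrtr //.
    apply: le_trans (_ : amp0 a <= _); last by rewrite lerDl.
    rewrite /amp0 mulrDl -addrA lerDl addr_ge0 ?sqr_ge0 //.
    by rewrite !divr_ge0 ?mulr_ge0 ?sqrtr_ge0.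
  - exact: filter_err_small_arg (B_a yn_small).
exists k^-1; split; first by rewrite invr_ge0 ltW.
  exact: inv_sqr_le_large_arg yn_large B_ta c_le.
rewrite mulVf ?gt_eqF // mul1r.
have : `|P - y| <= `|P - P0| + `|P0| + `|y|.
  have -> : P - y = (P - P0) + (P0 - y) by rewrite addrA subrK.
  by apply: le_trans (ler_normD _ _) _; rewrite -addrA lerD2l ler_normB.
have := mulr_ge0 e_ge0 (normr_ge0 y); lra.
Qed.

End FilterEstimate.

Section FilterFacts.
Variables (R : realType) (phi : R -> R -> R -> R).
Hypothesis phi_filter : nonlinear_reg_filter phi.

Lemma filter_lipschitz a k s t : 0 < a -> 0 < k ->
  `|phi a k s - phi a k t| <= `|s - t|.
Proof. by move=> a_gt0 k_gt0; have [_ L _ _] := phi_filter a_gt0 k_gt0. Qed.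

Lemma filter_norm_le a k s : 0 < a -> 0 < k -> `|phi a k s| <= `|s|.
Proof.
move=> a_gt0 k_gt0; have [_ _ phi0 _] := phi_filter a_gt0 k_gt0.
by have := filter_lipschitz s 0 a_gt0 k_gt0; rewrite phi0 !subr0.
Qed.

Lemma filter_cvg_seq (alpha : nat -> R) k s : (forall n, 0 < alpha n) ->
  alpha @ \oo --> 0 -> 0 < k -> (fun n => phi (alpha n) k s) @ \oo --> s.
Proof.
move=> alpha_gt0 alpha_cvg0 k_gt0; have [_ _ _] := phi_filter ltr01 k_gt0.
move/(_ s); apply: cvg_comp; move=> P /alpha_cvg0 [N _ alphaP].
by exists N => // n /alphaP; apply; exact: alpha_gt0.
Qed.

End FilterFacts.

Section SquareSummable.
Variables (R : realType) (I : choiceType).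

Lemma in_l2_bounded (c : I -> R) : in_l2 c -> exists2 K, 0 <= K & forall i, `|c i| <= K.
Proof.
move=> /in_l2P [M cM]; exists (Num.sqrt M) => [|i]; first exact: sqrtr_ge0.
apply: ler_sqrt_of_sqr_le => //; rewrite real_normK ?num_real //.
by have := cM [fset i]%fset; rewrite big_seq_fset1.
Qed.

Lemma fsums_le_sqr_scale (a : R) (x : I -> R) (M : R) :
  fsums_le (fun i => x i ^+ 2) M -> fsums_le (fun i => (a * `|x i|) ^+ 2) (a ^+ 2 * M).
Proof.
move=> xM F; have -> : \sum_(i <- F) (a * `|x i|) ^+ 2 = a ^+ 2 * \sum_(i <- F) x i ^+ 2.
  by rewrite mulr_sumr; apply: eq_bigr => i _; rewrite exprMn real_normK ?num_real.
by rewrite ler_wpM2l ?sqr_ge0.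
Qed.

Lemma fsums_le_sqr_add (a b c : I -> R) (Mb Mc : R) :
  (forall i, 0 <= b i) -> (forall i, 0 <= c i) -> (forall i, `|a i| <= b i + c i) ->
  fsums_le (fun i => b i ^+ 2) Mb -> fsums_le (fun i => c i ^+ 2) Mc ->
  fsums_le (fun i => a i ^+ 2) (2 * Mb + 2 * Mc).
Proof.
move=> b_ge0 c_ge0 a_le bM cM F.
apply: le_trans (_ : \sum_(i <- F) (2 * b i ^+ 2 + 2 * c i ^+ 2) <= _); last first.
  by rewrite big_split /= -!mulr_sumr lerD // ler_wpM2l.
apply: ler_sum => i _; rewrite -real_normK ?num_real //.
have : `|a i| ^+ 2 <= (b i + c i) ^+ 2 by rewrite ler_sqr ?nnegrE ?addr_ge0.
have := sqr_ge0 (b i - c i); nra.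
Qed.

Lemma fsums_le_sqr_mul_norm (rho n : I -> R) (p q N : R) : 0 <= p -> 0 <= q ->
  (forall i, rho i ^+ 2 <= p + q * n i ^+ 2) -> fsums_le (fun i => n i ^+ 2) N ->
  fsums_le (fun i => (rho i * `|n i|) ^+ 2) (p * N + q * N ^+ 2).
Proof.
move=> p_ge0 q_ge0 rho_le nN F.
have n2_ge0 : 0 <= \sum_(i <- F) n i ^+ 2 by apply: sumr_ge0 => i _; exact: sqr_ge0.
apply: le_trans (_ : \sum_(i <- F) (p * n i ^+ 2 + q * (n i ^+ 2) ^+ 2) <= _).
  apply: ler_sum => i _; rewrite exprMn real_normK ?num_real //.
  have -> : p * n i ^+ 2 + q * (n i ^+ 2) ^+ 2 = (p + q * n i ^+ 2) * n i ^+ 2 by ring.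
  by rewrite ler_wpM2r ?sqr_ge0.
rewrite big_split /= -!mulr_sumr lerD ?ler_wpM2l //.
apply: le_trans (sum_sqr_le_sqr_sum _ (fun i => sqr_ge0 (n i))) _.
by rewrite ler_sqr ?nnegrE // (le_trans n2_ge0).
Qed.

End SquareSummable.

Section FilteredDFD.
Variables (R : realType) (X Y : completeNormedModType R)
  (ipX : X -> X -> R) (ipY : Y -> Y -> R) (A : X -> Y) (I : choiceType)
  (u ubar : I -> X) (v : I -> Y) (kappa : I -> R) (phi : R -> R -> R -> R)
  (delta alpha : nat -> R) (y : Y) (yk : nat -> Y) (x0 : X) (c : I -> R)
  (alpha_t d e K bu bv bb : R).
Hypotheses (ipX_inner : inner_product ipX) (ipY_inner : inner_product ipY)
  (kappa_gt0 : forall i, 0 < kappa i)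
  (adjoint : forall i x, ipY (A x) (v i) = kappa i * ipX x (u i))
  (u_bessel : forall x, fsums_le (fun i => ipX x (u i) ^+ 2) (bu * `|x| ^+ 2))
  (v_bessel : forall z, fsums_le (fun i => ipY z (v i) ^+ 2) (bv * `|z| ^+ 2))
  (bv_ge0 : 0 <= bv) (bb_ge0 : 0 <= bb)
  (ubar_bessel : forall x, fsums_le (fun i => ipX x (ubar i) ^+ 2) (bb * `|x| ^+ 2))
  (ubar_synthesis : forall (c : I -> R) (F : {fset I}),
     `|\sum_(i <- F) c i *: ubar i| ^+ 2 <= bb * \sum_(i <- F) c i ^+ 2)
  (ubar_dual : forall x, kerperp ipX A x -> HasSum (fun i => ipX x (u i) *: ubar i) x)
  (phi_filter : nonlinear_reg_filter phi)
  (d_gt0 : 0 < d) (e_gt0 : 0 < e)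
  (phi_B : forall k a x, 0 < k -> 0 < a -> `|x| <= d * a / k ->
     `|phi a k x| <= e * k / Num.sqrt a * `|x|)
  (delta_cvg0 : delta @ \oo --> 0)
  (alpha_gt0 : forall k, 0 < alpha k) (alpha_cvg0 : alpha @ \oo --> 0)
  (ratio_cvg0 : (fun k => delta k ^+ 2 / alpha k) @ \oo --> 0)
  (Ax0 : A x0 = y) (alpha_t_gt0 : 0 < alpha_t) (K_ge0 : 0 <= K)
  (c_le_K : forall i, `|c i| <= K)
  (c_source : forall i, phi alpha_t (kappa i) (c i) = ipY y (v i))
  (yk_near : forall k, `|yk k - y| <= delta k).

(* [yc] and [nc k] are the coefficients of y and of the noise y^k - y against (v_i);
   [xc] those of A^+ y against (u_i) (see [xc_coef]) and [Bc k] those of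
   B_{alpha_k}(y^k) in (ubar_i). *)
Let yc i := ipY y (v i).
Let xc i := (kappa i)^-1 * yc i.
Let nc k i := ipY (yk k - y) (v i).
Let Bc k i := (kappa i)^-1 * phi (alpha k) (kappa i) (ipY (yk k) (v i)).
Let noise_err k := amp0 d e alpha_t K (alpha k) * (bv * delta k ^+ 2) +
  amp2 d (alpha k) * (bv * delta k ^+ 2) ^+ 2.

Lemma xc_coef x : A x = y -> forall i, xc i = ipX x (u i).
Proof. by move=> Ax i; rewrite /xc /yc -Ax adjoint mulKf ?gt_eqF. Qed.

Lemma yk_coef k i : ipY (yk k) (v i) = yc i + nc k i.
Proof. by rewrite /nc (ipBl ipY_inner) addrC subrK. Qed.

Lemma nc_l2 k : fsums_le (fun i => nc k i ^+ 2) (bv * delta k ^+ 2).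
Proof.
move=> F; apply: le_trans (v_bessel _ F) _; rewrite ler_wpM2l // ler_sqr ?nnegrE //.
exact: le_trans (yk_near k).
Qed.

Lemma Bc_err k i : exists rho, [/\ 0 <= rho,
  rho ^+ 2 <= amp0 d e alpha_t K (alpha k) + amp2 d (alpha k) * nc k i ^+ 2
  & `|Bc k i - xc i| <= (e + 2) * `|xc i| + rho * `|nc k i|].
Proof.
have [a_gt0 k_gt0] := (alpha_gt0 k, kappa_gt0 i).
set P := phi (alpha k) (kappa i) (yc i + nc k i).
have B_ta : `|c i| <= d * alpha_t / kappa i ->
    `|yc i| <= e * kappa i / Num.sqrt alpha_t * `|c i|.
  by rewrite /yc -c_source; exact: phi_B.
have lip := filter_lipschitz phi_filter (yc i + nc k i) (yc i) a_gt0 k_gt0.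
rewrite addrAC subrr add0r in lip.
have [rho [rho_ge0 rho_le err_le]] := filter_err_le d_gt0 e_gt0 alpha_t_gt0 K_ge0
  a_gt0 k_gt0 (filter_norm_le phi_filter _ a_gt0 k_gt0)
  (filter_norm_le phi_filter (yc i) a_gt0 k_gt0) lip (phi_B k_gt0 a_gt0) B_ta (c_le_K i).
exists rho; split => //.
have -> : Bc k i - xc i = (P - yc i) / kappa i.
  by rewrite /Bc yk_coef -/P /xc; field; rewrite gt_eqF.
rewrite normrM normfV (gtr0_norm k_gt0) ler_pdivrMr //.
have -> : ((e + 2) * `|xc i| + rho * `|nc k i|) * kappa i =
    (e + 2) * `|yc i| + rho * kappa i * `|nc k i|.
  by rewrite /xc normrM normfV (gtr0_norm k_gt0); field; rewrite gt_eqF.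
exact: err_le.
Qed.

Lemma Bc_dominated : exists g : nat -> I -> R, [/\ forall k i, 0 <= g k i,
  forall k i, `|Bc k i - xc i| <= (e + 2) * `|xc i| + g k i
  & forall k, fsums_le (fun i => g k i ^+ 2) (noise_err k)].
Proof.
have [rho rhoP] := choice (fun ki : nat * I => Bc_err ki.1 ki.2).
exists (fun k i => rho (k, i) * `|nc k i|); split=> [k i|k i|k].
- by case: (rhoP (k, i)) => rho_ge0 _ _; rewrite mulr_ge0.
- by case: (rhoP (k, i)).
- apply: fsums_le_sqr_mul_norm (nc_l2 k) => [||i]; first exact: amp0_ge0.
  + exact: sqr_ge0.
  + by case: (rhoP (k, i)).
Qed.

Lemma noise_err_cvg0 : noise_err @ \oo --> 0.
Proof.
pose r k := delta k ^+ 2 / alpha k.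
pose C1 := (1 + e) ^+ 2 + 2 * e * K / (d * Num.sqrt alpha_t).
pose C3 := (K / (d * alpha_t)) ^+ 2.
have -> : noise_err = fun k =>
    bv * (C1 * r k + C3 * (delta k * delta k)) + (2 * bv / d) ^+ 2 * (r k * r k).
  apply: funext => k; rewrite /noise_err /amp0 /amp2 /r /C1 /C3.
  have a_gt0 := alpha_gt0 k; have s_gt0 : 0 < Num.sqrt alpha_t by rewrite sqrtr_gt0.
  by field; rewrite !gt_eqF.
rewrite -[X in _ --> X](_ : bv * (C1 * 0 + C3 * (0 * 0)) + (2 * bv / d) ^+ 2 * (0 * 0) = 0);
  last by rewrite !(mulr0, addr0).
apply: cvgD; apply: cvgMl_tmp; first apply: cvgD; first apply: cvgMl_tmp.
- exact: ratio_cvg0.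
- by apply: cvgMl_tmp; apply: cvgM.
- by apply: cvgM.
Qed.

Lemma Bc_cvg i : Bc ^~ i @ \oo --> xc i.
Proof.
have k_gt0 := kappa_gt0 i.
pose D k := phi (alpha k) (kappa i) (yc i + nc k i) - phi (alpha k) (kappa i) (yc i).
have D_cvg0 : D @ \oo --> 0.
  apply: norm_cvg0; apply: (@squeeze_cvgr _ _ _ _ (fun=> 0) (fun k => delta k * `|v i|)).
  - apply: nearW => k; rewrite normr_ge0 /=.
    apply: le_trans (filter_lipschitz phi_filter _ _ (alpha_gt0 k) k_gt0) _.
    rewrite addrAC subrr add0r; apply: le_trans (ip_norm_le ipY_inner _ _) _.
    by rewrite ler_wpM2r.
  - exact: cvg_cst.
  - by rewrite -(mul0r `|v i|); apply: cvgMr_tmp.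
have -> : Bc ^~ i = fun k => (kappa i)^-1 * (D k + phi (alpha k) (kappa i) (yc i)).
  by apply: funext => k; rewrite /Bc yk_coef /D subrK.
have phi_cvg := filter_cvg_seq phi_filter (s := yc i) alpha_gt0 alpha_cvg0 k_gt0.
by have := cvgMl_tmp (a := (kappa i)^-1) (cvgD D_cvg0 phi_cvg); rewrite add0r; exact.
Qed.

Lemma phi_coef_l2 k : in_l2 (fun i => phi (alpha k) (kappa i) (ipY (yk k) (v i))).
Proof.
apply/in_l2P; exists (bv * `|yk k| ^+ 2) => F; apply: le_trans (v_bessel (yk k) F).
apply: ler_sum => i _; rewrite -(real_normK (num_real (phi _ _ _))).
rewrite -(real_normK (num_real (ipY _ _))) ler_sqr ?nnegrE //.
exact: filter_norm_le (alpha_gt0 k) (kappa_gt0 i).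
Qed.

Lemma filtered_DFD_weak_cvg : exists xk : nat -> X,
  (forall k, B_value ipY ubar v kappa phi (alpha k) (yk k) (xk k)) /\
  forall xdag, MP_value ipX A y xdag -> weak_cvg ipX xk xdag.
Proof.
have xc_l2 : fsums_le (fun i => xc i ^+ 2) (bu * `|x0| ^+ 2).
  move=> F; apply: le_trans (u_bessel x0 F).
  by apply: ler_sum => i _; rewrite (xc_coef Ax0).
have [g [g_ge0 Bc_dom g_l2]] := Bc_dominated.
have Bc_l2 k : in_l2 (Bc k).
  apply/in_l2P; exists (2 * ((e + 3) ^+ 2 * (bu * `|x0| ^+ 2)) + 2 * noise_err k).
  apply: fsums_le_sqr_add (fsums_le_sqr_scale _ xc_l2) (g_l2 k) => [i|i|i].
  - by rewrite mulr_ge0 // addr_ge0 // ltW.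
  - exact: g_ge0.
  - have := Bc_dom k i; have := ler_normD (Bc k i - xc i) (xc i); rewrite subrK; lra.
have [xk xk_sum] := choice (fun k => HasSum_synthesis bb_ge0 ubar_synthesis (Bc_l2 k)).
exists xk; split=> [k|xdag [xdag_perp Axdag]].
  by split; [split; [exact: phi_coef_l2|exact: Bc_l2]|exact: xk_sum].
have xdag_sum : HasSum (fun i => xc i *: ubar i) xdag.
  have -> : (fun i => xc i *: ubar i) = (fun i => ipX xdag (u i) *: ubar i).
    by apply: funext => i; rewrite (xc_coef Axdag).
  exact: ubar_dual.
apply: (weak_cvg_dominated ipX_inner _ xk_sum xdag_sum _
  (fsums_le_sqr_scale (e + 2) xc_l2) g_ge0 g_l2 noise_err_cvg0 Bc_dom Bc_cvg).
  move=> z; exists (bb * `|z| ^+ 2) => F; apply: le_trans (ubar_bessel z F).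
  by apply: ler_sum => i _; rewrite (ipC ipX_inner).
by move=> i; rewrite mulr_ge0 // addr_ge0 // ltW.
Qed.

End FilteredDFD.

Unset Implicit Arguments.
Theorem theorem4p11 (R : realType)
  (X Y : completeNormedModType R)
  (ipX : X -> X -> R) (ipY : Y -> Y -> R)
  (A : {linear X -> Y}) (I : countType)
  (u ubar : I -> X) (v : I -> Y) (kappa : I -> R)
  (phi : R -> R -> R -> R)
  (delta alpha : nat -> R) (y : Y) (yk : nat -> Y) (alpha_t : R) :
  inner_product ipX -> inner_product ipY ->
  continuous A ->
  is_DFD ipX ipY A u v kappa ->
  (exists M : R, forall i, kappa i <= M) ->
  is_dual_frame ipX (kerperp ipX A) u ubar ->
  nonlinear_reg_filter phi ->
  assumption_B phi ->
  (forall k, 0 < delta k) -> delta @ \oo --> 0 ->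
  (forall k, 0 < alpha k) -> alpha @ \oo --> 0 ->
  (fun k => delta k ^+ 2 / alpha k) @ \oo --> 0 ->
  range A y ->
  0 < alpha_t ->
  (exists c : I -> R, in_l2 c /\
     forall i, phi alpha_t (kappa i) (c i) = ipY y (v i)) ->
  (forall k, `|yk k - y| <= delta k) ->
  exists xk : nat -> X,
    (forall k, B_value ipY ubar v kappa phi (alpha k) (yk k) (xk k)) /\
    forall xdag, MP_value ipX A y xdag -> weak_cvg ipX xk xdag.
Proof.
move=> ipX_inner ipY_inner _ [u_frame v_frame kappa_gt0 adjoint] _ [ubar_frame ubar_dual]
  phi_filter [_ [d [e [d_gt0 e_gt0 phi_B]]]] _ delta_cvg0 alpha_gt0 alpha_cvg0 ratio_cvg0
  [x0 _ Ax0] alpha_t_gt0 [c [c_l2 c_source]] yk_near.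
have ker_subspace := kerperp_subspace A ipX_inner.
have [K K_ge0 c_le_K] := in_l2_bounded c_l2.
have [bu /ltW bu_ge0 u_upper] := frame_upper u_frame.
have [bv /ltW bv_ge0 v_upper] := frame_upper v_frame.
have [bb /ltW bb_ge0 ubar_upper] := frame_upper ubar_frame.
exact: (filtered_DFD_weak_cvg ipX_inner ipY_inner kappa_gt0 adjoint
  (frame_bessel ipX_inner ker_subspace u_frame.1 bu_ge0 u_upper)
  (frame_bessel ipY_inner (closed_range_subspace A) v_frame.1 bv_ge0 v_upper)
  bv_ge0 bb_ge0 (frame_bessel ipX_inner ker_subspace ubar_frame.1 bb_ge0 ubar_upper)
  (frame_synthesis_le ipX_inner ker_subspace ubar_frame.1 bb_ge0 ubar_upper) ubar_dual
  phi_filter d_gt0 e_gt0 phi_B delta_cvg0 alpha_gt0 alpha_cvg0 ratio_cvg0 Ax0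
  alpha_t_gt0 K_ge0 c_le_K c_source yk_near).
Qed.
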